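(* For every $d\ge1$ and every $\mathbf{u}\in\binom{\mathbb{N}}{d}$ one has $\mathrm{Inc}(C(\mathbf{u}))=C(\mathbf{u}+\mathbf{1})$.
   Context: $\mathbb{N}=\{1,2,3,\dots\}$. For $d\ge1$, $\binom{\mathbb{N}}{d}$ is the set of $d$-element subsets of $\mathbb{N}$; an element is written $\mathbf{u}=(u_1,\ldots,u_d)$ with $u_1<\cdots<u_d$. The squashed order on $\binom{\mathbb{N}}{d}$: $\mathbf{u}<\mathbf{v}$ iff the largest element of the symmetric difference $(\mathbf{u}\setminus\mathbf{v})\cup(\mathbf{v}\setminus\mathbf{u})$ belongs to $\mathbf{v}$. For $\mathbf{u}\in\binom{\mathbb{N}}{d}$, $C(\mathbf{u})=\{\mathbf{v}\in\binom{\mathbb{N}}{d}\mid \mathbf{v}\le\mathbf{u}\}$ (squashed order), and $\mathbf{u}+\mathbf{1}=(u_1+1,\ldots,u_d+1)$. Let $\mathrm{Inc}_1$ be the set of maps $\pi\colon\mathbb{N}\to\mathbb{N}$ with $\pi(j)<\pi(j+1)$ and $\pi(j)\le j+1$ for all $j\ge1$, acting by $\pi(\mathbf{u})=(\pi(u_1),\ldots,\pi(u_d))$. For $\mathcal{F}\subseteq\binom{\mathbb{N}}{d}$, $\mathrm{Inc}(\mathcal{F})=\{\pi(\mathbf{u})\mid \mathbf{u}\in\mathcal{F},\ \pi\in\mathrm{Inc}_1\}$. *)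

From mathcomp Require Import all_boot.
Set Implicit Arguments. Unset Strict Implicit. Unset Printing Implicit Defensive.

(* An element of binom(N,d), N = {1,2,...}: a strictly increasing list of
   positive naturals of length d (u_1 < ... < u_d). *)
Definition is_dsub (d : nat) (u : seq nat) : bool :=
  [&& sorted ltn u, all (fun x => 0 < x) u & size u == d].

(* symmetric difference of u and v (as a list, possibly with repetitions) *)
Definition symdiff (u v : seq nat) : seq nat :=
  [seq x <- u ++ v | (x \in u) != (x \in v)].

Definition squashed_lt (u v : seq nat) : bool :=
  (symdiff u v != [::]) && ((\max_(x <- symdiff u v) x) \in v).

Definition squashed_le (u v : seq nat) : bool := (u == v) || squashed_lt u v.

Definition Cset (d : nat) (u : seq nat) : seq nat -> Prop :=
  fun v => is_dsub d v /\ squashed_le v u.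

Definition add1 (u : seq nat) : seq nat := map S u.

(* Inc_1: maps pi : N -> N with pi j < pi (j+1) and pi j <= j+1 for j >= 1.
   Only values on N = {1,2,...} matter; pi maps N into N. *)
Definition Inc1 (pi : nat -> nat) : Prop :=
  forall j, 1 <= j -> [/\ 0 < pi j, pi j < pi j.+1 & pi j <= j.+1].

Definition IncF (F : seq nat -> Prop) : seq nat -> Prop :=
  fun v => exists u pi, [/\ F u, Inc1 pi & v = map pi u].

From mathcomp Require Import all_boot zify.
Set Implicit Arguments. Unset Strict Implicit.

(* On d-subsets the squashed order is colexicographic: v <= u iff the decreasing
   enumeration of v is lexicographically below that of u.  A map in Inc_1 raises
   each entry by at most one, so pi(w) <= w + 1 <= u + 1.  Conversely, for
   v <= u + 1 let k + 1 be the least positive integer missing from v; then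
   v = bump (k + 1) w for w = unbump (k + 1) v, and bump (k + 1) is in Inc_1.
   Scanning v downwards, entries above k + 1 drop by one, matching the shift from
   u + 1 to u; once an entry x <= k is reached the rest of v is x, x - 1, ..., 1,
   which lies entrywise below any decreasing positive list of the same length.
   Hence w <= u. *)

Lemma mem_bigmax_seq (s : seq nat) : s != [::] -> \max_(x <- s) x \in s.
Proof.
elim: s => // a s IH _; rewrite big_cons in_cons.
case: s IH => [|b s] IH; first by rewrite big_nil maxn0 eqxx.
by rewrite /maxn; case: ltnP => _; rewrite ?IH ?orbT ?eqxx.
Qed.

Lemma path_gtn_lt x s z : path gtn x s -> z \in s -> z < x.
Proof. by move=> /(order_path_min (rev_trans ltn_trans)) /allP; apply. Qed.

Lemma path_gtn_leq x s z : path gtn x s -> z \in x :: s -> z <= x.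
Proof. by move=> xs; rewrite in_cons => /predU1P[->|/(path_gtn_lt xs)/ltnW]. Qed.

Lemma path_gtn_size y t : path gtn y t -> 0 < y -> all (fun x => 0 < x) t ->
  size t < y.
Proof.
elim: t y => [|z t IH] y //= /andP[zy zt] _ /andP[z0 pt].
exact: leq_ltn_trans (IH z zt z0 pt) zy.
Qed.

Lemma all2_leq_sorted_gtn V U :
  sorted gtn V -> sorted gtn U -> all (fun x => 0 < x) U ->
  all (fun x => x <= size V) V -> size V = size U -> all2 leq V U.
Proof.
elim: V U => [|x s IH] [|y t] //= pV pU /andP[y0 pt] /andP[x_sz ps] [sz].
have t_y := path_gtn_size pU y0 pt.
rewrite (leq_trans x_sz) ?sz //=; apply: IH (path_sorted pV) (path_sorted pU) pt _ sz.
by apply/allP => z /(path_gtn_lt pV) zx; rewrite -ltnS (leq_trans zx).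
Qed.

Fixpoint lexle (s t : seq nat) : bool :=
  match s, t with
  | [::], _ => true
  | _ :: _, [::] => false
  | x :: s', y :: t' => (x < y) || (x == y) && lexle s' t'
  end.

Lemma lexle_all2 s t : all2 leq s t -> lexle s t.
Proof.
elim: s t => [|x s IH] [|y t] //= /andP[]; rewrite leq_eqVlt.
by case/predU1P=> [->|->] // /IH ->; rewrite eqxx orbT.
Qed.

Lemma lexle_map_succ f w u :
  {in w, forall x, f x <= x.+1} -> lexle w u -> lexle (map f w) (map S u).
Proof.
elim: w u => [|x w IH] [|y u] //= fw.
have := fw x (mem_head x w); rewrite leq_eqVlt => fx.
case/orP=> [xy|/andP[/eqP<- wu]].
  by case/predU1P: fx => [->|fx]; rewrite ltnS ?(leq_trans _ xy) // ltnW.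
case/predU1P: fx => [->|->] //; rewrite eqxx ltnn /=.
by apply: IH wu => z zw; apply: fw; rewrite in_cons zw orbT.
Qed.

Lemma mem_symdiff v u x : (x \in symdiff v u) = ((x \in v) != (x \in u)).
Proof. by rewrite mem_filter mem_cat; case: (x \in v); case: (x \in u). Qed.

Lemma squashed_lt_max v u z :
  z \in symdiff v u -> {in symdiff v u, forall y, y <= z} ->
  squashed_lt v u = (z \in u).
Proof.
move=> zD max_z; rewrite /squashed_lt.
have -> : symdiff v u != [::] by apply: contraTneq zD => ->.
suff -> : \max_(y <- symdiff v u) y = z by [].
apply/eqP; rewrite eqn_leq (leq_bigmax_seq z zD) // andbT.
by apply/bigmax_leqP_seq => y /max_z.
Qed.

Lemma eq_squashed_lt v1 u1 v2 u2 :
  symdiff v1 u1 =i symdiff v2 u2 -> {in symdiff v1 u1, u1 =i u2} ->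
  squashed_lt v1 u1 = squashed_lt v2 u2.
Proof.
move=> eD eu; rewrite /squashed_lt.
have -> : (symdiff v1 u1 != [::]) = (symdiff v2 u2 != [::]).
  by rewrite -!size_eq0 -!lt0n -!has_predT (eq_has_r eD).
case: (boolP (_ != [::])) => //= D2; rewrite (eq_big_idem _ _ maxnn eD) -eu // eD.
exact: mem_bigmax_seq.
Qed.

Lemma squashed_lt_cons x s y t : path gtn x s -> path gtn y t ->
  squashed_lt (x :: s) (y :: t) = (x < y) || (x == y) && squashed_lt s t.
Proof.
move=> xs yt; have x_s z : z \in s -> z < x := path_gtn_lt xs.
have y_t z : z \in t -> z < y := path_gtn_lt yt.
have bound z : z \in symdiff (x :: s) (y :: t) -> (z <= x) || (z <= y).
  rewrite mem_symdiff; case: (boolP (z \in x :: s)) => [/(path_gtn_leq xs) -> //|_].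
  by move=> /negbNE /(path_gtn_leq yt) ->; rewrite orbT.
case: ltngtP => [xy|yx|eq_xy] /=.
- have y_notin : y \notin x :: s by apply/negP => /(path_gtn_leq xs); rewrite leqNgt xy.
  rewrite (squashed_lt_max (z := y)) ?mem_head //.
    by rewrite mem_symdiff mem_head (negbTE y_notin).
  by move=> z /bound /orP[zx|//]; rewrite (leq_trans zx) // ltnW.
- have x_notin : x \notin y :: t by apply/negP => /(path_gtn_leq yt); rewrite leqNgt yx.
  rewrite (squashed_lt_max (z := x)) ?(negbTE x_notin) //.
    by rewrite mem_symdiff mem_head (negbTE x_notin).
  by move=> z /bound /orP[//|zy]; rewrite (leq_trans zy) // ltnW.
- subst y; have x_notin_s : x \notin s by apply/negP => /x_s; rewrite ltnn.
  have x_notin_t : x \notin t by apply/negP => /y_t; rewrite ltnn.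
  apply: eq_squashed_lt => z; rewrite !mem_symdiff !in_cons.
    by case: (eqVneq z x) => [->|] //=; rewrite (negbTE x_notin_s) (negbTE x_notin_t).
  by case: (eqVneq z x) => [->|] //; rewrite !mem_head.
Qed.

Lemma squashed_le_lexle V U :
  sorted gtn V -> sorted gtn U -> squashed_le V U = lexle V U.
Proof.
rewrite /squashed_le; elim: V U => [|x s IH] [|y t] pV pU //=.
- rewrite (squashed_lt_max (z := y)) ?mem_head ?mem_symdiff ?mem_head //.
  by move=> z; rewrite mem_symdiff in_nil => /negbNE /(path_gtn_leq pU).
- by rewrite /squashed_lt in_nil andbF.
rewrite eqseq_cons squashed_lt_cons // -IH ?(path_sorted pV) ?(path_sorted pU) //.
by rewrite andb_orr orbCA.
Qed.

Lemma squashed_le_rev v u : sorted ltn v -> sorted ltn u ->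
  squashed_le v u = lexle (rev v) (rev u).
Proof.
move=> sv su; rewrite -squashed_le_lexle ?rev_sorted // /squashed_le.
rewrite (can_eq revK); congr orb.
by apply: eq_squashed_lt => [z|z _]; rewrite ?mem_symdiff !mem_rev.
Qed.

Lemma Inc1_homo pi : Inc1 pi -> {in [pred x | 0 < x] &, {homo pi : x y / x < y}}.
Proof.
move=> Ipi x y x0 _; elim: y => // y IH; rewrite ltnS leq_eqVlt.
case/predU1P=> [<-|xy]; first by case: (Ipi x x0).
by case: (Ipi y (leq_trans x0 (ltnW xy))) => _ /(ltn_trans (IH xy)).
Qed.

Lemma Inc1_dsub d pi w : Inc1 pi -> is_dsub d w -> is_dsub d (map pi w).
Proof.
move=> Ipi /and3P[sw pw sz]; apply/and3P; split.
- exact: homo_sorted_in (Inc1_homo Ipi) pw sw.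
- by rewrite all_map; apply/allP => x /(allP pw) x0; case: (Ipi x x0).
- by rewrite size_map.
Qed.

Lemma Inc1_succ : Inc1 S.
Proof. by []. Qed.

Lemma Inc1_bump h : Inc1 (bump h).
Proof.
by move=> j j1; rewrite /bump; case: (leqP h j); case: (leqP h j.+1); split; lia.
Qed.

Lemma unbump_id h i : i <= h -> unbump h i = i.
Proof. by rewrite /unbump ltnNge => ->; rewrite subn0. Qed.

Lemma unbump_pred h i : h < i -> unbump h i = i.-1.
Proof. by rewrite /unbump => ->; rewrite subn1. Qed.

Lemma lexle_unbump k V U :
  sorted gtn V -> sorted gtn U -> all (fun x => 0 < x) U -> size V = size U ->
  (forall j, 0 < j <= k -> j \in V) -> k.+1 \notin V ->
  lexle V (map S U) -> lexle (map (unbump k.+1) V) U.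
Proof.
elim: V U => [|x s IH] [|y t] // pV pU /andP[y0 pt] [sz] init kV.
have x_max z : z \in x :: s -> z <= x := path_gtn_leq pV.
case: (leqP x k) => [xk _|kx].
  rewrite map_id_in => [|z /x_max zx]; last first.
    by rewrite unbump_id // ltnW // ltnS (leq_trans zx).
  apply/lexle_all2/all2_leq_sorted_gtn => //=; [exact/andP| |by rewrite sz].
  have x_sz : x <= (size s).+1.
    rewrite -[x in x <= _](size_iota 1) -[(size s).+1]/(size (x :: s)).
    apply: uniq_leq_size (iota_uniq 1 x) _ => j; rewrite mem_iota => /andP[j1 jx].
    by apply: init; rewrite j1 (leq_trans _ xk) // -ltnS -add1n.
  rewrite x_sz; apply/allP => z zs; apply: leq_trans x_sz.
  by apply: x_max; rewrite in_cons zs orbT.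
have x_gt : k.+1 < x.
  by rewrite ltn_neqAle kx andbT; apply: contraNneq kV => ->; exact: mem_head.
rewrite /= unbump_pred //; case/orP=> [xy|/andP[/eqP xy st]].
  by apply/orP; left; lia.
rewrite xy eqxx /= orbC IH ?(path_sorted pV) ?(path_sorted pU) //.
- move=> j jk; have := init j jk; rewrite in_cons; case: (eqVneq j x) => [jx|//].
  by move: jk; rewrite jx; lia.
- by apply: contra kV; rewrite in_cons => ->; rewrite orbT.
Qed.

Lemma exists_initial_gap (v : seq nat) :
  exists2 k, k.+1 \notin v & forall j, 0 < j <= k -> j \in v.
Proof.
have gap : exists n, n.+1 \notin v.
  exists (\max_(x <- v) x); apply/negP.
  by move=> /(leq_bigmax_seq (P := xpredT) (F := id)) /(_ isT); rewrite ltnn.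
have [k kv kmin] := ex_minnP gap; exists k => // j /andP[j0 jk].
apply: contraLR jk => jv; rewrite -ltnNge -(prednK j0) ltnS.
by apply: kmin; rewrite prednK.
Qed.

Lemma map_bump_unbump h v : h \notin v -> map (bump h) (map (unbump h) v) = v.
Proof.
move=> hv; rewrite -map_comp map_id_in // => x xv /=; rewrite unbumpK //=.
by apply: contraNneq hv => <-.
Qed.

Lemma dsub_unbump d h v : 0 < h -> h \notin v -> is_dsub d v ->
  is_dsub d (map (unbump h) v).
Proof.
move=> h0 hv /and3P[sv pv sz]; apply/and3P; split; last by rewrite size_map.
  have ltn_bump2 x y : (bump h x < bump h y) = (x < y) by rewrite !ltnNge leq_bump2.
  rewrite -(eq_sorted ltn_bump2); move: sv; rewrite -{1}(map_bump_unbump hv) sorted_map.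
  exact: id.
rewrite all_map; apply/allP => x /(allP pv) /= x0.
by case: (leqP x h) => xh; [rewrite unbump_id | rewrite unbump_pred]; lia.
Qed.

Lemma IncF_Cset_sub d u v : is_dsub d u -> IncF (Cset d u) v -> Cset d (add1 u) v.
Proof.
move=> du [w [pi [[dw wu] Ipi ->]]]; have dpw := Inc1_dsub Ipi dw.
split=> //; move: (dw) (du) (dpw) (Inc1_dsub Inc1_succ du) wu.
move=> /and3P[sw pw _] /and3P[su _ _] /and3P[spw _ _] /and3P[su1 _ _].
rewrite !squashed_le_rev // /add1 -!map_rev; apply: lexle_map_succ => x.
by rewrite mem_rev => /(allP pw) x0; case: (Ipi x x0).
Qed.

Lemma Cset_add1_sub_IncF d u v : is_dsub d u -> Cset d (add1 u) v -> IncF (Cset d u) v.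
Proof.
move=> du [dv vu]; have [k kv init] := exists_initial_gap v.
have dw := dsub_unbump (ltn0Sn k) kv dv.
exists (map (unbump k.+1) v), (bump k.+1).
split; [split=> // | exact: Inc1_bump | by rewrite map_bump_unbump].
case/and3P: (dw) (dv) (du) (Inc1_dsub Inc1_succ du).
move=> sw _ _ /and3P[sv _ sz_v] /and3P[su pu sz_u] /and3P[su1 _ _].
rewrite squashed_le_rev // -map_rev; apply: lexle_unbump; rewrite ?rev_sorted ?all_rev //.
- by rewrite !size_rev (eqP sz_v) (eqP sz_u).
- by move=> j /init; rewrite mem_rev.
- by rewrite mem_rev.
- by rewrite map_rev -squashed_le_rev.
Qed.

Theorem lemma3p2 (d : nat) (u : seq nat) :
  1 <= d -> is_dsub d u ->
  forall v : seq nat, IncF (Cset d u) v <-> Cset d (add1 u) v.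
Proof.
move=> _ du v; split; [exact: IncF_Cset_sub | exact: Cset_add1_sub_IncF].
Qed.
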